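(* Let $\vartheta>0$ and $\gamma\in\mathbb R$ be fixed, let $\rho=1-\gamma/\sqrt s$, and let $F_s(\rho)=\sum_{n=0}^\infty p_s(0)\cdots p_s(n)\rho^{n+1}$ with $p_s(k)=\bigl(1+(k+1)\tfrac\vartheta s\bigr)^{-1}$, $k\in\mathbb N_0$. Then as $s\to\infty$, $F_s(\rho)\sim\Bigl(\frac2\vartheta\Bigr)^{1/2}\chi(\gamma/\sqrt{2\vartheta})\sqrt s+\frac{\gamma^3\sqrt2}{3\vartheta^{3/2}}\chi(\gamma/\sqrt{2\vartheta})-\frac{\gamma^2}{3\vartheta}-\frac23$, in the sense that the difference between the two sides tends to $0$.
   Context: $\chi$ denotes Mills' ratio, $\chi(\delta)=e^{\delta^2}\int_\delta^\infty e^{-y^2}dy$ for $\delta\in\mathbb R$. *)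

From Stdlib Require Import Reals.
From Coquelicot Require Import Coquelicot.
Open Scope R_scope.

Definition mills_chi (d : R) : R :=
  exp (d ^ 2) * RInt_gen (fun y => exp (- y ^ 2)) (at_point d) (Rbar_locally p_infty).

Definition p_s (theta s : R) (k : nat) : R :=
  / (1 + INR (k + 1) * theta / s).

Fixpoint prod_p (theta s : R) (n : nat) : R :=
  match n with
  | O => p_s theta s 0
  | S m => prod_p theta s m * p_s theta s (S m)
  end.

Definition F_s (theta s rho : R) : R :=
  Series (fun n => prod_p theta s n * rho ^ (n + 1)).

(* Write [rho = 1 - g / sqrt s] and [P(x) = sum_n p_s(0)...p_s(n) x^n], so that
   [F_s(rho) = rho P(rho)].  The recurrence for the coefficients makes [P] solve the linear
   ODE [P + (theta/s)(P + x P') = 1 + x P]; for [u(g) = F_s(rho) / sqrt s] this reads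
   [theta u' = g u / rho - 1].  Since [chi' = 2 d chi - 1], the leading term [U] solves
   [theta U' = g U - 1], and with an explicit cubic corrector [c] the approximation
   [V = U + c / sqrt s] solves the ODE of [u] up to a residual of size [O((1 + g^2)^3 / s)].
   The integrating factor [exp phase] decays like [exp (- g^2 / (2 theta))], so the residual
   of [(u - V) exp phase] is integrable in [g].  Integrating from [gamma] to [sqrt s / 2],
   where [u - V] is polynomially bounded and the integrating factor exponentially small,
   gives [sqrt s (u - V)(gamma) = O(1 / sqrt s)]. *)

From Stdlib Require Import Reals Lra Psatz Lia Classical.
From Coquelicot Require Import Coquelicot.
Open Scope R_scope.

Lemma is_lim_p_infty_intro (f : R -> R) (l : R) :
  (forall eps, 0 < eps -> exists M, forall x, M < x -> Rabs (f x - l) < eps) ->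
  is_lim f p_infty l.
Proof.
  intros H. apply is_lim_spec. intros eps.
  destruct (H eps (cond_pos eps)) as [M HM]. now exists M.
Qed.

Lemma is_lim_p_infty_of_le_inv_sqrt (f : R -> R) (D S0 : R) :
  (forall s, S0 < s -> Rabs (f s) <= D / sqrt s) -> is_lim f p_infty 0.
Proof.
  intros Hf. apply is_lim_p_infty_intro. intros eps Heps.
  exists (Rmax (Rmax S0 1) (Rsqr (D / eps))). intros s Hs.
  assert (HS0 : S0 < s) by (eapply Rle_lt_trans; [|exact Hs];
    eapply Rle_trans; [apply Rmax_l | apply Rmax_l]).
  assert (Hs1 : 1 < s) by (eapply Rle_lt_trans; [|exact Hs];
    eapply Rle_trans; [apply Rmax_r | apply Rmax_l]).
  assert (HD : Rsqr (D / eps) < s) by (eapply Rle_lt_trans; [apply Rmax_r | exact Hs]).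
  assert (Ht : 0 < sqrt s) by (apply sqrt_lt_R0; lra).
  assert (HDt : D / eps < sqrt s).
  { eapply Rle_lt_trans; [apply Rle_abs|]. rewrite <- sqrt_Rsqr_abs.
    apply sqrt_lt_1_alt. split; [apply Rle_0_sqr | exact HD]. }
  rewrite Rminus_0_r. eapply Rle_lt_trans; [exact (Hf s HS0)|].
  apply (Rmult_lt_reg_r (sqrt s)); [exact Ht|].
  replace (D / sqrt s * sqrt s) with D by (field; lra).
  apply (Rmult_lt_reg_r (/ eps)); [apply Rinv_0_lt_compat; lra|].
  replace (eps * sqrt s * / eps) with (sqrt s) by (field; lra). exact HDt.
Qed.

Lemma is_lim_p_infty_of_monotone_bounded (f : R -> R) (M : R) :
  (forall x y, 0 <= x <= y -> f x <= f y) -> (forall x, 0 <= x -> f x <= M) ->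
  exists L : R, is_lim f p_infty L.
Proof.
  intros Hmono Hbnd.
  set (E := fun z => exists x, 0 <= x /\ z = f x).
  assert (HE1 : bound E) by (exists M; intros z [x [Hx ->]]; auto).
  assert (HE2 : exists z, E z) by (exists (f 0), 0; split; [lra | reflexivity]).
  destruct (completeness E HE1 HE2) as [L [HLub HLleast]].
  exists L. apply is_lim_p_infty_intro. intros eps Heps.
  destruct (classic (exists x0, 0 <= x0 /\ L - eps < f x0)) as [[x0 [Hx0 Hfx0]]|Hnone].
  - exists x0. intros x Hx.
    assert (f x <= L) by (apply HLub; exists x; split; [lra | reflexivity]).
    assert (f x0 <= f x) by (apply Hmono; lra).
    apply Rabs_def1; lra.
  - enough (L <= L - eps) by lra.
    apply HLleast. intros z [x [Hx ->]].
    apply Rnot_lt_le. intros Hlt. apply Hnone. now exists x.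
Qed.

Lemma is_RInt_gen_p_infty_of_lim (f G : R -> R) (a L : R) :
  (forall b, a < b -> is_RInt f a b (G b)) -> is_lim G p_infty L ->
  is_RInt_gen f (at_point a) (Rbar_locally p_infty) L.
Proof.
  intros HI HG P HP. unfold filtermapi.
  apply Filter_prod with (fun x => x = a) (fun b => a < b /\ P (G b)).
  - reflexivity.
  - apply filter_and; [now exists a | now apply HG].
  - intros x y -> [Hy HPy]. exists (G y). split; auto.
Qed.

Lemma is_derive_plus_R (f g : R -> R) (x a b : R) :
  is_derive f x a -> is_derive g x b -> is_derive (fun y => f y + g y) x (a + b).
Proof. intros; now apply (@is_derive_plus R_AbsRing R_NormedModule). Qed.

Lemma is_derive_mult_R (f g : R -> R) (x a b : R) :
  is_derive f x a -> is_derive g x b ->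
  is_derive (fun y => f y * g y) x (a * g x + f x * b).
Proof. intros Hf Hg. exact (@is_derive_mult R_AbsRing f g x a b Hf Hg Rmult_comm). Qed.

Lemma is_derive_comp_R (f g : R -> R) (x a b : R) :
  is_derive f (g x) a -> is_derive g x b -> is_derive (fun y => f (g y)) x (b * a).
Proof. intros Hf Hg. exact (@is_derive_comp R_AbsRing R_NormedModule f g x a b Hf Hg). Qed.

Lemma is_derive_const_R (c x : R) : is_derive (fun _ => c) x 0.
Proof. exact (@is_derive_const R_AbsRing R_NormedModule c x). Qed.

Lemma is_derive_ext_R (f g : R -> R) (x a b : R) :
  (forall y, f y = g y) -> a = b -> is_derive f x a -> is_derive g x b.
Proof. intros Hfg -> Hf. exact (@is_derive_ext R_AbsRing R_NormedModule f g x b Hfg Hf). Qed.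

Lemma continuity_pt_of_is_derive (f : R -> R) (x a : R) : is_derive f x a -> continuity_pt f x.
Proof.
  intros Hf. apply continuity_pt_filterlim.
  apply (@ex_derive_continuous R_AbsRing R_NormedModule). now exists a.
Qed.

Lemma Rle_of_is_derive_nonneg (f df : R -> R) a b : a <= b ->
  (forall x, a <= x <= b -> is_derive f x (df x)) ->
  (forall x, a <= x <= b -> 0 <= df x) -> f a <= f b.
Proof.
  intros Hab Hd Hpos.
  destruct (MVT_gen f a b df) as [c [Hc Hfc]]; cbv zeta in *;
    rewrite ?Rmin_left, ?Rmax_right in * by lra.
  - intros x Hx. apply Hd; lra.
  - intros x Hx. apply (continuity_pt_of_is_derive f x (df x)), Hd; lra.
  - assert (0 <= df c * (b - a)) by (apply Rmult_le_pos; [apply Hpos|]; lra). lra.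
Qed.

Lemma Rabs_increment_le_of_is_derive (f df Q dQ : R -> R) a b : a <= b ->
  (forall x, a <= x <= b -> is_derive f x (df x)) ->
  (forall x, a <= x <= b -> is_derive Q x (dQ x)) ->
  (forall x, a <= x <= b -> Rabs (df x) <= dQ x) ->
  Rabs (f b - f a) <= Q b - Q a.
Proof.
  intros Hab Hf HQ Hdom.
  assert (Hlow : Q a - f a <= Q b - f b).
  { apply (Rle_of_is_derive_nonneg (fun x => Q x - f x) (fun x => dQ x - df x) a b Hab).
    - intros x Hx.
      apply (is_derive_ext_R (fun x => Q x + (-1) * f x) _ x (dQ x + (0 * f x + (-1) * df x)));
        [intros; cbv beta; ring | ring |].
      apply is_derive_plus_R; [now apply HQ|].
      apply is_derive_mult_R; [apply is_derive_const_R | now apply Hf].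
    - intros x Hx. specialize (Hdom x Hx). apply Rabs_le_between in Hdom. lra. }
  assert (Hup : Q a + f a <= Q b + f b).
  { apply (Rle_of_is_derive_nonneg (fun x => Q x + f x) (fun x => dQ x + df x) a b Hab).
    - intros x Hx. apply is_derive_plus_R; [now apply HQ | now apply Hf].
    - intros x Hx. specialize (Hdom x Hx). apply Rabs_le_between in Hdom. lra. }
  apply Rabs_le. lra.
Qed.

(* Comparing with [L atan], whose total variation on the line is [L PI]. *)
Lemma Rabs_increment_le_of_is_derive_le_inv_sq (f df : R -> R) (L a b : R) : a <= b ->
  (forall x, a <= x <= b -> is_derive f x (df x)) ->
  (forall x, a <= x <= b -> Rabs (df x) <= L / (1 + x ^ 2)) ->
  Rabs (f b - f a) <= L * PI.
Proof.
  intros Hab Hf Hdf.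
  assert (HL : 0 <= L).
  { specialize (Hdf a (conj (Rle_refl a) Hab)).
    assert (0 < 1 + a ^ 2) by nra.
    assert (0 <= L / (1 + a ^ 2)) by (eapply Rle_trans; [apply Rabs_pos | exact Hdf]).
    apply (Rmult_le_reg_r (/ (1 + a ^ 2))); [apply Rinv_0_lt_compat; lra | lra]. }
  eapply Rle_trans.
  - apply (Rabs_increment_le_of_is_derive f df (fun x => L * atan x)
             (fun x => L / (1 + x ^ 2)) a b Hab Hf); [|exact Hdf].
    intros x _. eapply is_derive_ext_R;
      [| | exact (is_derive_mult_R _ _ x _ _ (is_derive_const_R L x) (is_derive_atan x))].
    + reflexivity.
    + unfold Rsqr. field. nra.
  - destruct (atan_bound a), (atan_bound b). nra.
Qed.

Lemma exp_mult_INR (n : nat) y : exp (INR n * y) = exp y ^ n.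
Proof.
  induction n as [|n IH]; simpl pow.
  - now rewrite Rmult_0_l, exp_0.
  - rewrite S_INR, Rmult_plus_distr_r, Rmult_1_l, exp_plus, IH. ring.
Qed.

Lemma exp_le_exp x y : x <= y -> exp x <= exp y.
Proof. intros [H|H]; [left; now apply exp_increasing | rewrite H; lra]. Qed.

Lemma pow_le_one_plus_sq (x : R) (k N : nat) : (k <= 2 * N)%nat ->
  Rabs x ^ k <= (1 + x ^ 2) ^ N.
Proof.
  intros HkN.
  assert (HN : (1 + x ^ 2) ^ N = (1 + Rabs x ^ 2) ^ N) by now rewrite pow2_abs.
  rewrite HN. set (a := Rabs x). assert (Ha : 0 <= a) by apply Rabs_pos.
  destruct (Rle_lt_dec a 1) as [Ha1|Ha1].
  - apply Rle_trans with 1.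
    + rewrite <- (pow1 k). apply pow_incr. lra.
    + apply pow_R1_Rle. nra.
  - apply Rle_trans with (a ^ (2 * N)).
    + apply Rle_pow; [lra | exact HkN].
    + rewrite pow_mult. apply pow_incr. nra.
Qed.

(* With [q = 1 + x^2] and [m = N + 1], use [exp (k q) >= (k q / m)^m]. *)
Lemma poly_gauss_le_inv_sq (k : R) (N : nat) : 0 < k -> exists C, 0 < C /\
  forall x, (1 + x ^ 2) ^ N * exp (- (k * x ^ 2)) <= C / (1 + x ^ 2).
Proof.
  intros Hk. set (m := INR (N + 1)).
  assert (Hm : 0 < m) by (unfold m; apply lt_0_INR; lia).
  exists (exp k * (m / k) ^ (N + 1)). split.
  { apply Rmult_lt_0_compat; [apply exp_pos | apply pow_lt, Rdiv_lt_0_compat; lra]. }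
  intros x. set (q := 1 + x ^ 2).
  assert (Hq : 0 < q) by (unfold q; nra).
  set (y := k * q / m).
  assert (Hy : 0 < y) by (unfold y; apply Rdiv_lt_0_compat; nra).
  assert (Hexp : exp (- (k * x ^ 2)) = exp k * / exp (m * y)).
  { unfold y. replace (m * (k * q / m)) with (k * q) by (field; lra).
    rewrite <- exp_Ropp, <- exp_plus. f_equal. unfold q. ring. }
  assert (Hgrowth : y ^ (N + 1) <= exp (m * y)).
  { unfold m. rewrite exp_mult_INR. apply pow_incr. split; [lra|].
    assert (H1 := exp_ineq1_le y). lra. }
  assert (Hypow : y ^ (N + 1) = (k / m) ^ (N + 1) * q ^ N * q).
  { unfold y. replace (k * q / m) with (k / m * q) by (field; lra).
    rewrite Rpow_mult_distr, (pow_add q). simpl. ring. }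
  assert (Hkm : 0 < (k / m) ^ (N + 1)) by (apply pow_lt, Rdiv_lt_0_compat; lra).
  assert (HqN : 0 < q ^ N) by (apply pow_lt; lra).
  assert (Hek : 0 < exp k) by apply exp_pos.
  rewrite Hexp.
  apply Rle_trans with (q ^ N * (exp k * / ((k / m) ^ (N + 1) * q ^ N * q))).
  - apply Rmult_le_compat_l; [lra|]. apply Rmult_le_compat_l; [lra|].
    rewrite <- Hypow. apply Rinv_le_contravar; [|exact Hgrowth].
    rewrite Hypow. apply Rmult_lt_0_compat; [apply Rmult_lt_0_compat|]; lra.
  - right. replace ((m / k) ^ (N + 1)) with (/ (k / m) ^ (N + 1)).
    + field. repeat split; lra.
    + rewrite <- pow_inv. f_equal. field. lra.
Qed.

Definition gauss (y : R) : R := exp (- y ^ 2).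

Lemma gauss_pos y : 0 < gauss y.
Proof. apply exp_pos. Qed.

Lemma continuous_gauss y : continuous gauss y.
Proof.
  apply (@ex_derive_continuous R_AbsRing R_NormedModule). unfold gauss. auto_derive. auto.
Qed.

Lemma ex_RInt_gauss a b : ex_RInt gauss a b.
Proof. apply (@ex_RInt_continuous R_CompleteNormedModule). intros; apply continuous_gauss. Qed.

Lemma gauss_le_exp_linear (a y : R) : gauss y <= exp (a ^ 2 - 2 * a * y).
Proof. unfold gauss. apply exp_le_exp. pose proof (pow2_ge_0 (y - a)). nra. Qed.

Lemma is_RInt_exp_linear (a c d : R) : 0 < a ->
  is_RInt (fun y => exp (a ^ 2 - 2 * a * y)) c d
    ((exp (a ^ 2 - 2 * a * c) - exp (a ^ 2 - 2 * a * d)) / (2 * a)).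
Proof.
  intros Ha. set (F := fun y => - exp (a ^ 2 - 2 * a * y) / (2 * a)).
  replace ((exp (a ^ 2 - 2 * a * c) - exp (a ^ 2 - 2 * a * d)) / (2 * a))
    with (minus (F d) (F c)) by (unfold F, minus, plus, opp; simpl; field; lra).
  apply (@is_RInt_derive R_CompleteNormedModule).
  - intros x _. unfold F. auto_derive; [auto|].
    replace (a * (a * 1) + - (2 * a * x)) with (a ^ 2 - 2 * a * x) by ring. field. lra.
  - intros x _. apply (@ex_derive_continuous R_AbsRing R_NormedModule). auto_derive. auto.
Qed.

Lemma is_RInt_gen_exp_linear (a d : R) : 0 < a ->
  is_RInt_gen (fun y => exp (a ^ 2 - 2 * a * y)) (at_point d) (Rbar_locally p_infty)
    (exp (a ^ 2 - 2 * a * d) / (2 * a)).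
Proof.
  intros Ha.
  apply is_RInt_gen_p_infty_of_lim with
    (G := fun b => (exp (a ^ 2 - 2 * a * d) - exp (a ^ 2 - 2 * a * b)) / (2 * a)).
  - intros b _. now apply is_RInt_exp_linear.
  - apply is_lim_p_infty_intro. intros eps Heps.
    exists ((a ^ 2 - ln (2 * a * eps)) / (2 * a)). intros x Hx.
    assert (Hsmall : exp (a ^ 2 - 2 * a * x) < 2 * a * eps).
    { rewrite <- (exp_ln (2 * a * eps)) by nra. apply exp_increasing.
      apply (Rmult_lt_compat_l (2 * a)) in Hx; [|lra]. field_simplify in Hx; lra. }
    assert (0 < exp (a ^ 2 - 2 * a * x)) by apply exp_pos.
    rewrite Rabs_left1.
    + apply (Rmult_lt_reg_r (2 * a)); [lra|]. field_simplify; lra.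
    + apply (Rmult_le_reg_r (2 * a)); [lra|]. field_simplify; lra.
Qed.

Lemma gauss_tail_integral : exists L, forall d,
  is_RInt_gen gauss (at_point d) (Rbar_locally p_infty) (RInt gauss d 0 + L).
Proof.
  destruct (is_lim_p_infty_of_monotone_bounded (fun b => RInt gauss 0 b) (exp 1 / 2))
    as [L HL].
  - intros x y Hxy.
    rewrite <- (RInt_Chasles gauss 0 x y) by apply ex_RInt_gauss.
    assert (0 <= RInt gauss x y).
    { apply RInt_ge_0; [lra | apply ex_RInt_gauss | intros; left; apply gauss_pos]. }
    unfold plus; simpl. lra.
  - intros x Hx.
    apply Rle_trans with (RInt (fun y => exp (1 ^ 2 - 2 * 1 * y)) 0 x).
    + apply RInt_le; [exact Hx | apply ex_RInt_gauss | | intros; apply gauss_le_exp_linear].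
      eexists. exact (is_RInt_exp_linear 1 0 x Rlt_0_1).
    + rewrite (is_RInt_unique _ _ _ _ (is_RInt_exp_linear 1 0 x Rlt_0_1)).
      assert (0 < exp (1 ^ 2 - 2 * 1 * x)) by apply exp_pos.
      replace (1 ^ 2 - 2 * 1 * 0) with 1 by ring. lra.
  - exists L. intros d.
    apply (is_RInt_gen_Chasles gauss 0 (RInt gauss d 0) L).
    + apply is_RInt_gen_at_point, (@RInt_correct R_CompleteNormedModule), ex_RInt_gauss.
    + apply is_RInt_gen_p_infty_of_lim with (G := fun b => RInt gauss 0 b); [|exact HL].
      intros b _. apply (@RInt_correct R_CompleteNormedModule), ex_RInt_gauss.
Qed.

Lemma mills_chi_RInt : exists L, forall d, mills_chi d = exp (d ^ 2) * (RInt gauss d 0 + L).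
Proof.
  destruct gauss_tail_integral as [L HL]. exists L. intros d.
  unfold mills_chi. f_equal. now apply is_RInt_gen_unique, HL.
Qed.

Lemma is_derive_mills_chi (d : R) : is_derive mills_chi d (2 * d * mills_chi d - 1).
Proof.
  destruct mills_chi_RInt as [L HL].
  apply is_derive_ext_R with (f := fun d => exp (d ^ 2) * (RInt gauss d 0 + L))
    (a := 2 * d * exp (d ^ 2) * (RInt gauss d 0 + L) + exp (d ^ 2) * - gauss d).
  - intros; symmetry; apply HL.
  - rewrite HL. unfold gauss.
    replace (exp (d ^ 2) * - exp (- d ^ 2)) with (- (exp (d ^ 2) * exp (- d ^ 2))) by ring.
    rewrite <- exp_plus. replace (d ^ 2 + - d ^ 2) with 0 by ring. rewrite exp_0. ring.
  - apply (is_derive_mult_R (fun y => exp (y ^ 2)) (fun y => RInt gauss y 0 + L)).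
    + auto_derive; [auto|]. replace (d * (d * 1)) with (d ^ 2) by ring. ring.
    + apply is_derive_ext_R with (f := fun a => RInt gauss a 0 + L) (a := opp (gauss d) + 0);
        [reflexivity | unfold opp; simpl; ring |].
      apply is_derive_plus_R; [|apply is_derive_const_R].
      apply (is_derive_RInt' gauss (fun a => RInt gauss a 0) d 0).
      * apply filter_forall. intros. apply (@RInt_correct R_CompleteNormedModule), ex_RInt_gauss.
      * apply continuous_gauss.
Qed.

Lemma mills_chi_bound (a d : R) : 0 < a -> Rabs (mills_chi d) <= exp ((d - a) ^ 2) / (2 * a).
Proof.
  intros Ha. destruct gauss_tail_integral as [L HL].
  assert (Htail : norm (RInt gauss d 0 + L) <= exp (a ^ 2 - 2 * a * d) / (2 * a)).
  { apply (RInt_gen_norm (V := R_CompleteNormedModule) (Fa := at_point d)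
      (Fb := Rbar_locally p_infty) gauss (fun y => exp (a ^ 2 - 2 * a * y)));
      [| | exact (HL d) | exact (is_RInt_gen_exp_linear a d Ha)].
    - apply Filter_prod with (fun x => x = d) (fun y => d < y);
        [reflexivity | now exists d | intros x y -> H; simpl; lra].
    - apply Filter_prod with (fun _ => True) (fun _ => True);
        [reflexivity | now exists 0 |].
      intros x y _ _ z _. unfold norm; simpl; unfold abs; simpl.
      rewrite Rabs_pos_eq by (left; apply gauss_pos). apply gauss_le_exp_linear. }
  unfold norm in Htail; simpl in Htail; unfold abs in Htail; simpl in Htail.
  assert (Hmills : mills_chi d = exp (d ^ 2) * (RInt gauss d 0 + L)).
  { unfold mills_chi. f_equal. now apply is_RInt_gen_unique, HL. }
  rewrite Hmills, Rabs_mult, Rabs_pos_eq by (left; apply exp_pos).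
  apply Rle_trans with (exp (d ^ 2) * (exp (a ^ 2 - 2 * a * d) / (2 * a))).
  - apply Rmult_le_compat_l; [left; apply exp_pos | exact Htail].
  - right. unfold Rdiv. rewrite <- Rmult_assoc, <- exp_plus. f_equal. f_equal. ring.
Qed.

Lemma sqrt_2_div (theta : R) : 0 < theta -> sqrt (2 / theta) = 2 / sqrt (2 * theta).
Proof.
  intros Htheta. replace (2 / theta) with (2 ^ 2 / (2 * theta)) by (field; lra).
  rewrite sqrt_div_alt, sqrt_pow2; lra.
Qed.

Section ScaledMills.

Variable theta : R.
Hypothesis theta_pos : 0 < theta.

Definition mills_scaled (g : R) : R := sqrt (2 / theta) * mills_chi (g / sqrt (2 * theta)).

Lemma is_derive_mills_scaled (g : R) :
  is_derive mills_scaled g ((g * mills_scaled g - 1) / theta).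
Proof.
  assert (Hk : 0 < sqrt (2 * theta)) by (apply sqrt_lt_R0; lra).
  assert (Hkk : sqrt (2 * theta) * sqrt (2 * theta) = 2 * theta) by (apply sqrt_sqrt; lra).
  unfold mills_scaled. rewrite (sqrt_2_div theta theta_pos). set (k := sqrt (2 * theta)) in *.
  assert (Hlin : is_derive (fun y => y / k) g (/ k)) by (auto_derive; [auto | field; lra]).
  eapply is_derive_ext_R; [reflexivity | |
    exact (is_derive_mult_R _ _ g _ _ (is_derive_const_R (2 / k) g)
             (is_derive_comp_R mills_chi _ g _ _ (is_derive_mills_chi (g / k)) Hlin))].
  cbv beta. replace theta with (k * k / 2) by lra.
  field. lra.
Qed.

Definition mills_scaled_bound (gamma : R) : R :=
  sqrt (2 / theta) * (exp ((gamma / sqrt (2 * theta) - 1) ^ 2) / 2).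

Lemma mills_scaled_bound_pos gamma : 0 < mills_scaled_bound gamma.
Proof.
  apply Rmult_lt_0_compat.
  - apply sqrt_lt_R0, Rdiv_lt_0_compat; lra.
  - apply Rdiv_lt_0_compat; [apply exp_pos | lra].
Qed.

Lemma Rabs_mills_scaled_le gamma g : gamma <= g -> Rabs (mills_scaled g) <= mills_scaled_bound gamma.
Proof.
  intros Hg. assert (Hk : 0 < sqrt (2 * theta)) by (apply sqrt_lt_R0; lra).
  unfold mills_scaled, mills_scaled_bound. set (k := sqrt (2 * theta)) in *.
  rewrite Rabs_mult, (Rabs_pos_eq (sqrt _)) by apply sqrt_pos.
  apply Rmult_le_compat_l; [apply sqrt_pos|].
  assert (Hgk : gamma / k <= g / k) by (apply Rmult_le_compat_r; [left; apply Rinv_0_lt_compat|]; lra).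
  assert (Hexp1 : 1 <= exp ((gamma / k - 1) ^ 2)).
  { rewrite <- exp_0. apply exp_le_exp, pow2_ge_0. }
  destruct (Rle_dec (g / k) 1) as [Hle|Hgt].
  - eapply Rle_trans; [apply (mills_chi_bound 1 (g / k) Rlt_0_1)|].
    replace (2 * 1) with 2 by ring.
    apply Rmult_le_compat_r; [lra | apply exp_le_exp; nra].
  - eapply Rle_trans; [apply (mills_chi_bound (g / k) (g / k)); lra|].
    replace ((g / k - g / k) ^ 2) with 0 by ring. rewrite exp_0.
    apply Rle_trans with (/ 2); [|lra].
    unfold Rdiv. rewrite Rmult_1_l. apply Rinv_le_contravar; lra.
Qed.

End ScaledMills.

Section PowerSeries.

Variables theta s : R.
Hypothesis theta_pos : 0 < theta.
Hypothesis s_pos : 0 < s.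

Lemma p_s_pos_le_1 k : 0 < p_s theta s k <= 1.
Proof.
  unfold p_s.
  assert (0 <= INR (k + 1) * theta / s)
    by (apply Rdiv_le_0_compat; [apply Rmult_le_pos; [apply pos_INR | lra] | lra]).
  split; [apply Rinv_0_lt_compat; lra|].
  rewrite <- Rinv_1. apply Rinv_le_contravar; lra.
Qed.

Lemma p_s_le_inv k : p_s theta s k <= s / (INR (k + 1) * theta).
Proof.
  assert (Hk : 0 < INR (k + 1)) by (apply lt_0_INR; lia).
  unfold p_s. replace (s / (INR (k + 1) * theta)) with (/ (INR (k + 1) * theta / s))
    by (field; lra).
  apply Rinv_le_contravar; [apply Rdiv_lt_0_compat; nra | lra].
Qed.

Lemma prod_p_pos_le_1 n : 0 < prod_p theta s n <= 1.
Proof.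
  induction n as [|n IH]; simpl; [apply p_s_pos_le_1|].
  destruct (p_s_pos_le_1 (S n)). nra.
Qed.

Lemma CV_radius_prod_p : CV_radius (prod_p theta s) = p_infty.
Proof.
  apply CV_radius_infinite_DAlembert.
  - intros n. destruct (prod_p_pos_le_1 n); lra.
  - apply is_lim_seq_spec. intros eps.
    destruct (INR_unbounded (s / (theta * eps))) as [N HN].
    exists N. intros n Hn. simpl.
    destruct (prod_p_pos_le_1 n). destruct (p_s_pos_le_1 (S n)).
    replace (prod_p theta s n * p_s theta s (S n) / prod_p theta s n) with (p_s theta s (S n))
      by (field; lra).
    rewrite Rminus_0_r, Rabs_Rabsolu, Rabs_pos_eq by lra.
    assert (Heps : 0 < eps) by apply cond_pos.
    assert (HnN : INR N < INR (S n + 1)) by (apply lt_INR; lia).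
    assert (0 <= INR N) by apply pos_INR.
    eapply Rle_lt_trans; [apply p_s_le_inv|].
    apply (Rmult_lt_reg_r (INR (S n + 1) * theta)); [nra|].
    replace (s / (INR (S n + 1) * theta) * (INR (S n + 1) * theta)) with s by (field; nra).
    apply (Rmult_lt_compat_r (theta * eps)) in HN; [|nra].
    replace (s / (theta * eps) * (theta * eps)) with s in HN by (field; lra). nra.
Qed.

Definition Pser (x : R) : R := PSeries (prod_p theta s) x.

Definition dPser (x : R) : R := PSeries (PS_derive (prod_p theta s)) x.

Lemma is_derive_Pser x : is_derive Pser x (dPser x).
Proof. apply is_derive_PSeries. rewrite CV_radius_prod_p. simpl; auto. Qed.

Lemma ex_series_entire (a : nat -> R) x :
  CV_radius a = p_infty -> ex_series (fun n => a n * x ^ n).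
Proof. intros Ha. apply ex_series_Rabs, CV_disk_inside. rewrite Ha. simpl; auto. Qed.

(* Coefficientwise this is the recurrence [prod_p n = prod_p (n+1) * (1 + (n+2) theta / s)]. *)
Lemma Pser_ode x : Pser x + theta / s * (Pser x + x * dPser x) = 1 + x * Pser x.
Proof.
  set (b := prod_p theta s).
  assert (Hb : CV_radius b = p_infty) by apply CV_radius_prod_p.
  assert (HdB : CV_radius (PS_derive b) = p_infty) by (rewrite CV_radius_derive; auto).
  assert (EB := ex_series_entire b x Hb).
  assert (ED := ex_series_entire _ x HdB).
  unfold Pser, dPser, PSeries. fold b.
  assert (HxD : x * Series (fun k => PS_derive b k * x ^ k)
                = Series (fun n => INR n * (b n * x ^ n))).
  { rewrite <- Series_scal_l, (Series_incr_1_aux (fun n => INR n * (b n * x ^ n)))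
      by (simpl; ring).
    apply Series_ext. intros n. unfold PS_derive. simpl. ring. }
  assert (EN : ex_series (fun n => INR n * (b n * x ^ n))).
  { apply ex_series_incr_1. eapply ex_series_ext;
      [|apply (@ex_series_scal_l R_AbsRing R_NormedModule x _ ED)].
    intros n. unfold PS_derive, scal; simpl. unfold mult; simpl. ring. }
  rewrite HxD.
  set (C := fun n => b n * x ^ n + theta / s * (b n * x ^ n + INR n * (b n * x ^ n))).
  assert (EC : ex_series C).
  { apply (@ex_series_plus R_AbsRing R_NormedModule); [exact EB|].
    apply (@ex_series_scal_l R_AbsRing R_NormedModule),
      (@ex_series_plus R_AbsRing R_NormedModule); auto. }
  rewrite <- (Series_plus _ _ EB EN), <- Series_scal_l, <- Series_plus
    by (auto; apply (@ex_series_scal_l R_AbsRing R_NormedModule),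
             (@ex_series_plus R_AbsRing R_NormedModule); auto).
  fold C. rewrite (Series_incr_1 C EC), <- Series_scal_l.
  assert (0 <= theta / s) by (apply Rdiv_le_0_compat; lra).
  f_equal.
  - unfold C, b. simpl. unfold p_s. simpl. field. split; lra.
  - apply Series_ext. intros n. unfold C, b. simpl prod_p. unfold p_s.
    replace (S n + 1)%nat with (S (S n)) by lia. rewrite !S_INR. simpl pow.
    assert (0 <= INR n) by apply pos_INR.
    field. split; nra.
Qed.

Lemma Rabs_Pser_half_le : Rabs (Pser (1 / 2)) <= 2.
Proof.
  assert (Hgeom : is_series (fun n => (1 / 2) ^ n) 2).
  { pose proof (is_series_geom (1 / 2)) as H. replace (/ (1 - 1 / 2)) with 2 in H by field.
    apply H. rewrite Rabs_pos_eq; lra. }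
  unfold Pser, PSeries. eapply Rle_trans.
  - apply Series_Rabs, CV_disk_inside. rewrite CV_radius_prod_p. simpl; auto.
  - apply Rle_trans with (Series (fun n => (1 / 2) ^ n));
      [|right; exact (is_series_unique _ _ Hgeom)].
    apply Series_le; [|now exists 2].
    intros n. destruct (prod_p_pos_le_1 n). assert (0 <= (1 / 2) ^ n) by (apply pow_le; lra).
    rewrite Rabs_pos_eq by (apply Rmult_le_pos; lra).
    split; [apply Rmult_le_pos | rewrite <- (Rmult_1_l ((1 / 2) ^ n)) at 2;
      apply Rmult_le_compat_r]; lra.
Qed.

End PowerSeries.

Lemma F_s_eq (theta s rho : R) : F_s theta s rho = rho * Pser theta s rho.
Proof.
  unfold F_s, Pser, PSeries. rewrite <- Series_scal_l. apply Series_ext. intros n.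
  rewrite Nat.add_1_r. simpl. ring.
Qed.

Lemma le_half_sqrt (g s : R) : 4 * g ^ 2 <= s -> g <= sqrt s / 2.
Proof.
  intros H. replace (4 * g ^ 2) with (Rsqr (2 * g)) in H by (unfold Rsqr; ring).
  apply sqrt_le_1_alt in H. rewrite sqrt_Rsqr_abs in H.
  pose proof (Rle_abs (2 * g)). lra.
Qed.

Lemma one_sub_div_sqrt_pos (g s : R) : 0 < s -> g < sqrt s -> 0 < 1 - g / sqrt s.
Proof.
  intros Hs Hg. assert (Ht : 0 < sqrt s) by (apply sqrt_lt_R0; lra).
  apply Rlt_0_minus. apply (Rmult_lt_reg_r (sqrt s)); [exact Ht|]. field_simplify; lra.
Qed.

Section Defect.

Variable theta : R.
Hypothesis theta_pos : 0 < theta.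

Definition F_scaled (s g : R) : R := F_s theta s (1 - g / sqrt s) / sqrt s.

Definition corrector (g : R) : R :=
  g ^ 3 * mills_scaled theta g / (3 * theta) - g ^ 2 / (3 * theta) - 2 / 3.

Definition expansion (s g : R) : R := mills_scaled theta g + corrector g / sqrt s.

Definition defect (s g : R) : R := F_scaled s g - expansion s g.

(* [exp (phase s)] is an integrating factor for the linear ODE satisfied by [F_scaled s]. *)
Definition phase (s g : R) : R := (sqrt s * g + s * ln (1 - g / sqrt s)) / theta.

Definition residual (s g : R) : R :=
  (g ^ 3 * mills_scaled theta g + g ^ 2 * corrector g) / (theta * s * (1 - g / sqrt s)).

Lemma is_derive_F_scaled (s g : R) : 0 < s ->
  is_derive (F_scaled s) g ((g / sqrt s * Pser theta s (1 - g / sqrt s) - 1) / theta).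
Proof.
  intros Hs. assert (Ht : 0 < sqrt s) by (apply sqrt_lt_R0; lra).
  assert (Htt : sqrt s * sqrt s = s) by (apply sqrt_sqrt; lra).
  set (t := sqrt s) in *.
  assert (Hrho : is_derive (fun g => 1 - g / t) g (- / t)) by (auto_derive; [auto | field; lra]).
  assert (HP := is_derive_comp_R _ _ g _ _ (is_derive_Pser theta s theta_pos Hs (1 - g / t)) Hrho).
  eapply is_derive_ext_R;
    [| | exact (is_derive_mult_R _ _ g _ _ (is_derive_mult_R _ _ g _ _ Hrho HP)
                                            (is_derive_const_R (/ t) g))].
  - intros y. unfold F_scaled. fold t. now rewrite F_s_eq.
  - cbv beta. assert (Hode := Pser_ode theta s theta_pos Hs (1 - g / t)).
    set (rho := 1 - g / t) in *. set (P := Pser theta s rho) in *.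
    set (D := dPser theta s rho) in *.
    assert (HPD : P + rho * D = s / theta * (1 + rho * P - P)).
    { apply (Rmult_eq_reg_l (theta / s)); [|apply Rgt_not_eq, Rdiv_lt_0_compat; lra].
      replace (theta / s * (s / theta * (1 + rho * P - P))) with (1 + rho * P - P)
        by (field; lra). lra. }
    replace ((- / t * P + rho * (- / t * D)) * / t + rho * P * 0)
      with (- (P + rho * D) / (t * t)) by (field; lra).
    rewrite Htt, HPD. unfold rho. field. lra.
Qed.

Lemma is_derive_corrector (g : R) : is_derive corrector g
  (g ^ 2 / theta * mills_scaled theta g
   + g ^ 3 / (3 * theta) * ((g * mills_scaled theta g - 1) / theta) - 2 * g / (3 * theta)).
Proof.
  assert (Hcube : is_derive (fun g => g ^ 3 / (3 * theta)) g (g ^ 2 / theta))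
    by (auto_derive; [auto | field; lra]).
  assert (Hrest : is_derive (fun g => - g ^ 2 / (3 * theta) - 2 / 3) g (- 2 * g / (3 * theta)))
    by (auto_derive; [auto | field; lra]).
  eapply is_derive_ext_R;
    [| | exact (is_derive_plus_R _ _ g _ _
                 (is_derive_mult_R _ _ g _ _ Hcube (is_derive_mills_scaled theta theta_pos g))
                 Hrest)].
  - intros y. unfold corrector. field. lra.
  - cbv beta. field. lra.
Qed.

Lemma is_derive_phase (s g : R) : 0 < s -> g < sqrt s ->
  is_derive (phase s) g (- g / (theta * (1 - g / sqrt s))).
Proof.
  intros Hs Hg. assert (Ht : 0 < sqrt s) by (apply sqrt_lt_R0; lra).
  assert (Htt : sqrt s * sqrt s = s) by (apply sqrt_sqrt; lra).
  assert (Hrho := one_sub_div_sqrt_pos g s Hs Hg).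
  unfold phase. auto_derive; [unfold Rdiv in Hrho; lra|].
  set (t := sqrt s) in *. rewrite <- Htt. field. unfold Rdiv in Hrho. repeat split; lra.
Qed.

(* The corrector is chosen so that [theta c' = g^2 U + g c]; this cancels the
   [O(1/sqrt s)] part of the residual and leaves an [O(1/s)] one. *)
Lemma is_derive_defect_exp_phase (s g : R) : 0 < s -> g < sqrt s ->
  is_derive (fun g => defect s g * exp (phase s g)) g (residual s g * exp (phase s g)).
Proof.
  intros Hs Hg. assert (Ht : 0 < sqrt s) by (apply sqrt_lt_R0; lra).
  assert (Htt : sqrt s * sqrt s = s) by (apply sqrt_sqrt; lra).
  assert (Hrho := one_sub_div_sqrt_pos g s Hs Hg).
  assert (Hexpansion : is_derive (expansion s) g
    ((g * mills_scaled theta g - 1) / theta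
     + (g ^ 2 / theta * mills_scaled theta g
        + g ^ 3 / (3 * theta) * ((g * mills_scaled theta g - 1) / theta)
        - 2 * g / (3 * theta)) * / sqrt s)).
  { eapply is_derive_ext_R;
      [| | exact (is_derive_plus_R _ _ g _ _ (is_derive_mills_scaled theta theta_pos g)
                   (is_derive_mult_R _ _ g _ _ (is_derive_corrector g)
                      (is_derive_const_R (/ sqrt s) g)))];
      [intros y; reflexivity | cbv beta; ring]. }
  assert (Hdefect := is_derive_plus_R _ _ g _ _ (is_derive_F_scaled s g Hs)
                       (is_derive_mult_R _ _ g _ _ (is_derive_const_R (-1) g) Hexpansion)).
  assert (Hexp := is_derive_comp_R exp (phase s) g _ _ (is_derive_exp (phase s g))
                    (is_derive_phase s g Hs Hg)).
  eapply is_derive_ext_R; [| | exact (is_derive_mult_R _ _ g _ _ Hdefect Hexp)].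
  - intros y. cbv beta. unfold defect. ring.
  - cbv beta. unfold residual, F_scaled, expansion, corrector. rewrite F_s_eq.
    set (t := sqrt s) in *. rewrite <- Htt. field. unfold Rdiv in Hrho. repeat split; lra.
Qed.

Lemma phase_add_sq_antitone (s a b : R) : 0 < s -> a <= b -> b < sqrt s ->
  phase s b + b ^ 2 / (2 * theta) <= phase s a + a ^ 2 / (2 * theta).
Proof.
  intros Hs Hab Hb. assert (Ht : 0 < sqrt s) by (apply sqrt_lt_R0; lra).
  enough (- (phase s a + a ^ 2 / (2 * theta)) <= - (phase s b + b ^ 2 / (2 * theta))) by lra.
  apply (Rle_of_is_derive_nonneg (fun x => - (phase s x + x ^ 2 / (2 * theta)))
           (fun x => x ^ 2 / (theta * sqrt s * (1 - x / sqrt s))) a b Hab).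
  - intros x Hx. assert (Hrho := one_sub_div_sqrt_pos x s Hs ltac:(lra)).
    assert (Hsq : is_derive (fun x => x ^ 2 / (2 * theta)) x (x / theta))
      by (auto_derive; [auto | field; lra]).
    eapply is_derive_ext_R; [| |
      exact (is_derive_mult_R _ _ x _ _ (is_derive_const_R (-1) x)
               (is_derive_plus_R _ _ x _ _ (is_derive_phase s x Hs ltac:(lra)) Hsq))].
    + intros y. cbv beta. ring.
    + cbv beta. field. unfold Rdiv in Hrho. repeat split; lra.
  - intros x Hx. assert (Hrho := one_sub_div_sqrt_pos x s Hs ltac:(lra)).
    apply Rdiv_le_0_compat; [apply pow2_ge_0 | apply Rmult_lt_0_compat; nra].
Qed.

End Defect.

Section Estimate.

Variables theta gamma : R.
Hypothesis theta_pos : 0 < theta.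

Definition corrector_bound : R :=
  mills_scaled_bound theta gamma / (3 * theta) + 1 / (3 * theta) + 2 / 3.

Lemma corrector_bound_pos : 0 < corrector_bound.
Proof.
  pose proof (mills_scaled_bound_pos theta theta_pos gamma).
  unfold corrector_bound.
  assert (0 <= mills_scaled_bound theta gamma / (3 * theta)) by (apply Rdiv_le_0_compat; lra).
  assert (0 <= 1 / (3 * theta)) by (apply Rdiv_le_0_compat; lra). lra.
Qed.

Lemma Rabs_corrector_le (g : R) : gamma <= g ->
  Rabs (corrector theta g) <= corrector_bound * (1 + g ^ 2) ^ 2.
Proof.
  intros Hg. set (B := mills_scaled_bound theta gamma). set (Q := (1 + g ^ 2) ^ 2).
  set (X := g ^ 3 * mills_scaled theta g).
  assert (HB := mills_scaled_bound_pos theta theta_pos gamma). fold B in HB.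
  assert (HX : Rabs X <= Q * B).
  { unfold X. rewrite Rabs_mult, <- RPow_abs.
    apply Rmult_le_compat; [apply pow_le, Rabs_pos | apply Rabs_pos | |].
    - apply pow_le_one_plus_sq. lia.
    - now apply Rabs_mills_scaled_le. }
  assert (Hg2 : g ^ 2 <= Q) by (rewrite <- pow2_abs; apply pow_le_one_plus_sq; lia).
  assert (HQ : 1 <= Q) by (rewrite <- (pow_O (Rabs g)); apply pow_le_one_plus_sq; lia).
  assert (0 <= g ^ 2) by apply pow2_ge_0.
  apply Rabs_le_between in HX.
  replace (corrector theta g) with ((X - g ^ 2 - 2 * theta) / (3 * theta))
    by (unfold corrector, X; field; lra).
  replace (corrector_bound * Q) with ((Q * B + Q + 2 * theta * Q) / (3 * theta))
    by (unfold corrector_bound; fold B; field; lra).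
  apply Rabs_le. unfold Rdiv. rewrite Ropp_mult_distr_l.
  split; apply Rmult_le_compat_r; try (left; apply Rinv_0_lt_compat; lra); nra.
Qed.

Definition residual_bound : R :=
  2 * (mills_scaled_bound theta gamma + corrector_bound) / theta.

Lemma residual_bound_pos : 0 < residual_bound.
Proof.
  pose proof (mills_scaled_bound_pos theta theta_pos gamma). pose proof corrector_bound_pos.
  unfold residual_bound. apply Rdiv_lt_0_compat; lra.
Qed.

Lemma Rabs_residual_le (s g : R) : 0 < s -> gamma <= g -> g <= sqrt s / 2 ->
  Rabs (residual theta s g) <= residual_bound / s * (1 + g ^ 2) ^ 3.
Proof.
  intros Hs Hg Hgs. assert (Ht : 0 < sqrt s) by (apply sqrt_lt_R0; lra).
  assert (Hrho : 1 / 2 <= 1 - g / sqrt s).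
  { enough (g / sqrt s <= 1 / 2) by lra.
    apply (Rmult_le_reg_r (sqrt s)); [exact Ht|]. field_simplify; lra. }
  set (B := mills_scaled_bound theta gamma). set (K := corrector_bound). set (Q := 1 + g ^ 2).
  assert (HB := mills_scaled_bound_pos theta theta_pos gamma). fold B in HB.
  assert (HK := corrector_bound_pos). fold K in HK.
  assert (Hnum : Rabs (g ^ 3 * mills_scaled theta g + g ^ 2 * corrector theta g)
                 <= (B + K) * Q ^ 3).
  { eapply Rle_trans; [apply Rabs_triang|]. rewrite !Rabs_mult, <- !RPow_abs.
    assert (H3 : Rabs g ^ 3 <= Q ^ 3) by (apply pow_le_one_plus_sq; lia).
    assert (H2 : Rabs g ^ 2 <= Q ^ 1) by (apply pow_le_one_plus_sq; lia).
    assert (HU := Rabs_mills_scaled_le theta theta_pos gamma g Hg). fold B in HU.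
    assert (Hc := Rabs_corrector_le g Hg). fold K Q in Hc.
    assert (Hterm1 : Rabs g ^ 3 * Rabs (mills_scaled theta g) <= Q ^ 3 * B)
      by (apply Rmult_le_compat; [apply pow_le, Rabs_pos | apply Rabs_pos | |]; assumption).
    assert (Hterm2 : Rabs g ^ 2 * Rabs (corrector theta g) <= Q ^ 1 * (K * Q ^ 2))
      by (apply Rmult_le_compat; [apply pow_le, Rabs_pos | apply Rabs_pos | |]; assumption).
    replace ((B + K) * Q ^ 3) with (Q ^ 3 * B + Q ^ 1 * (K * Q ^ 2)) by ring. lra. }
  assert (Hden : 0 < theta * s * (1 - g / sqrt s)) by (apply Rmult_lt_0_compat; nra).
  unfold residual. unfold Rdiv at 1. rewrite Rabs_mult, (Rabs_pos_eq (/ _))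
    by (left; apply Rinv_0_lt_compat; exact Hden).
  replace (residual_bound / s * Q ^ 3) with ((B + K) * Q ^ 3 * / (theta * s * (1 / 2)))
    by (unfold residual_bound; fold B K; field; lra).
  apply Rmult_le_compat; [apply Rabs_pos | left; apply Rinv_0_lt_compat; exact Hden |
                          exact Hnum |].
  apply Rinv_le_contravar; [nra | apply Rmult_le_compat_l; nra].
Qed.

Lemma defect_exp_phase_increment_le : exists C, forall s, 0 < s -> gamma <= sqrt s / 2 ->
  Rabs (defect theta s (sqrt s / 2) * exp (phase theta s (sqrt s / 2))
        - defect theta s gamma * exp (phase theta s gamma))
  <= C / s * exp (phase theta s gamma + gamma ^ 2 / (2 * theta)).
Proof.
  destruct (poly_gauss_le_inv_sq (1 / (2 * theta)) 3) as [C3 [HC3 Hgauss]];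
    [apply Rdiv_lt_0_compat; lra|].
  exists (residual_bound * C3 * PI). intros s Hs Hg.
  assert (Ht : 0 < sqrt s) by (apply sqrt_lt_R0; lra).
  assert (HR := residual_bound_pos).
  set (E := exp (phase theta s gamma + gamma ^ 2 / (2 * theta))).
  assert (HE : 0 < E) by apply exp_pos.
  replace (residual_bound * C3 * PI / s * E) with (residual_bound / s * E * C3 * PI)
    by (field; lra).
  apply (Rabs_increment_le_of_is_derive_le_inv_sq
           (fun x => defect theta s x * exp (phase theta s x))
           (fun x => residual theta s x * exp (phase theta s x))); [exact Hg | |].
  - intros x Hx. apply is_derive_defect_exp_phase; lra.
  - intros x [Hx1 Hx2].
    assert (Hq : 0 < 1 + x ^ 2) by nra.
    rewrite Rabs_mult, (Rabs_pos_eq (exp _)) by (left; apply exp_pos).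
    assert (Hphase : exp (phase theta s x) <= E * exp (- (1 / (2 * theta) * x ^ 2))).
    { unfold E. rewrite <- exp_plus. apply exp_le_exp.
      pose proof (phase_add_sq_antitone theta theta_pos s gamma x Hs Hx1 ltac:(lra)).
      replace (1 / (2 * theta) * x ^ 2) with (x ^ 2 / (2 * theta)) by (field; lra). lra. }
    eapply Rle_trans;
      [apply Rmult_le_compat; [apply Rabs_pos | left; apply exp_pos |
                                apply (Rabs_residual_le s x Hs Hx1 Hx2) | exact Hphase]|].
    replace (residual_bound / s * (1 + x ^ 2) ^ 3 * (E * exp (- (1 / (2 * theta) * x ^ 2))))
      with (residual_bound / s * E * ((1 + x ^ 2) ^ 3 * exp (- (1 / (2 * theta) * x ^ 2))))
      by ring.
    replace (residual_bound / s * E * C3 / (1 + x ^ 2))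
      with (residual_bound / s * E * (C3 / (1 + x ^ 2))) by (field; lra).
    apply Rmult_le_compat_l; [apply Rmult_le_pos; [apply Rdiv_le_0_compat|]; lra|].
    apply Hgauss.
Qed.

Lemma sqrt_mul_Rabs_defect_half_le (s : R) : 0 < s -> gamma <= sqrt s / 2 ->
  sqrt s * Rabs (defect theta s (sqrt s / 2))
  <= (1 + mills_scaled_bound theta gamma + corrector_bound) * (1 + sqrt s ^ 2) ^ 2.
Proof.
  intros Hs Hg. assert (Ht : 0 < sqrt s) by (apply sqrt_lt_R0; lra).
  set (t := sqrt s) in *. set (B := mills_scaled_bound theta gamma).
  set (K := corrector_bound). set (Q := (1 + t ^ 2) ^ 2).
  assert (HF : Rabs (t * F_scaled theta s (t / 2)) <= 1).
  { unfold F_scaled. fold t. replace (1 - t / 2 / t) with (1 / 2) by (field; lra).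
    rewrite F_s_eq. replace (t * (1 / 2 * Pser theta s (1 / 2) / t))
      with (1 / 2 * Pser theta s (1 / 2)) by (field; lra).
    rewrite Rabs_mult, (Rabs_pos_eq (1 / 2)) by lra.
    pose proof (Rabs_Pser_half_le theta s theta_pos Hs). lra. }
  assert (HU : Rabs (t * mills_scaled theta (t / 2)) <= B * Q).
  { rewrite Rabs_mult, (Rabs_pos_eq t) by lra.
    assert (Htq : t <= Q).
    { pose proof (pow_le_one_plus_sq t 1 2 ltac:(lia)) as Hp.
      now rewrite pow_1, Rabs_pos_eq in Hp by lra. }
    rewrite Rmult_comm. apply Rmult_le_compat; [apply Rabs_pos | lra | | exact Htq].
    exact (Rabs_mills_scaled_le theta theta_pos gamma (t / 2) Hg). }
  assert (Hc : Rabs (corrector theta (t / 2)) <= K * Q).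
  { eapply Rle_trans; [exact (Rabs_corrector_le (t / 2) Hg)|].
    apply Rmult_le_compat_l; [left; exact corrector_bound_pos|].
    apply pow_incr. split; nra. }
  assert (HQ : 1 <= Q) by (rewrite <- (pow_O (Rabs t)); apply pow_le_one_plus_sq; lia).
  rewrite <- (Rabs_pos_eq t) at 1 by lra. rewrite <- Rabs_mult.
  replace (t * defect theta s (t / 2))
    with (t * F_scaled theta s (t / 2) - t * mills_scaled theta (t / 2) - corrector theta (t / 2))
    by (unfold defect, expansion; fold t; field; lra).
  eapply Rle_trans; [apply Rabs_triang|]. rewrite Rabs_Ropp.
  eapply Rle_trans; [apply Rplus_le_compat_r, Rabs_triang|]. rewrite Rabs_Ropp.
  replace ((1 + B + K) * Q) with (Q + B * Q + K * Q) by ring. lra.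
Qed.

Lemma Rabs_defect_le_of_half : exists C, forall s, 0 < s -> gamma <= sqrt s / 2 ->
  Rabs (defect theta s gamma)
  <= (Rabs (defect theta s (sqrt s / 2)) * exp (- (1 / (8 * theta) * sqrt s ^ 2)) + C / s)
     * exp (gamma ^ 2 / (2 * theta)).
Proof.
  destruct defect_exp_phase_increment_le as [C HC]. exists C. intros s Hs Hg.
  assert (Ht : 0 < sqrt s) by (apply sqrt_lt_R0; lra).
  set (t := sqrt s) in *.
  set (wG := Rabs (defect theta s (t / 2))). set (wg := Rabs (defect theta s gamma)).
  set (EG := exp (phase theta s (t / 2))). set (Eg := exp (phase theta s gamma)).
  set (e0 := exp (gamma ^ 2 / (2 * theta))). set (decay := exp (- (1 / (8 * theta) * t ^ 2))).
  assert (HEg : 0 < Eg) by apply exp_pos.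
  assert (HwG : 0 <= wG) by apply Rabs_pos.
  assert (Hinc : wg * Eg <= wG * EG + C / s * (Eg * e0)).
  { specialize (HC s Hs Hg). fold t in HC. unfold e0, Eg. rewrite <- exp_plus.
    unfold wg, wG, EG, Eg.
    rewrite <- (Rabs_pos_eq (exp (phase theta s gamma))), <- Rabs_mult by (left; apply exp_pos).
    rewrite <- (Rabs_pos_eq (exp (phase theta s (t / 2)))), <- Rabs_mult by (left; apply exp_pos).
    rewrite Rabs_minus_sym in HC. pose proof (Rabs_triang_inv
      (defect theta s gamma * exp (phase theta s gamma))
      (defect theta s (t / 2) * exp (phase theta s (t / 2)))). lra. }
  assert (Hphase : EG <= Eg * (e0 * decay)).
  { unfold EG, Eg, e0, decay. rewrite <- !exp_plus. apply exp_le_exp.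
    assert (Hlt : t / 2 < t) by lra.
    pose proof (phase_add_sq_antitone theta theta_pos s gamma (t / 2) Hs Hg Hlt).
    replace (1 / (8 * theta) * t ^ 2) with ((t / 2) ^ 2 / (2 * theta)) by (field; lra). lra. }
  apply (Rmult_le_reg_r Eg); [exact HEg|].
  apply (Rle_trans _ _ _ Hinc).
  replace ((wG * decay + C / s) * e0 * Eg)
    with (wG * (Eg * (e0 * decay)) + C / s * (Eg * e0)) by ring.
  apply Rplus_le_compat_r, Rmult_le_compat_l; [exact HwG | exact Hphase].
Qed.

Lemma defect_estimate : exists D, forall s, 0 < s -> gamma <= sqrt s / 2 ->
  Rabs (sqrt s * defect theta s gamma) <= D / sqrt s.
Proof.
  destruct Rabs_defect_le_of_half as [C HC].
  destruct (poly_gauss_le_inv_sq (1 / (8 * theta)) 2) as [C2 [HC2 Hgauss]];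
    [apply Rdiv_lt_0_compat; lra|].
  set (M := 1 + mills_scaled_bound theta gamma + corrector_bound).
  assert (HM : 0 < M).
  { pose proof (mills_scaled_bound_pos theta theta_pos gamma). pose proof corrector_bound_pos.
    unfold M. lra. }
  set (e0 := exp (gamma ^ 2 / (2 * theta))). assert (He0 : 0 < e0) by apply exp_pos.
  exists (M * e0 * C2 + C * e0). intros s Hs Hg.
  assert (Ht : 0 < sqrt s) by (apply sqrt_lt_R0; lra).
  assert (Htt : sqrt s * sqrt s = s) by (apply sqrt_sqrt; lra).
  specialize (HC s Hs Hg). assert (Hhalf := sqrt_mul_Rabs_defect_half_le s Hs Hg).
  set (t := sqrt s) in *. fold M e0 in HC, Hhalf.
  set (decay := exp (- (1 / (8 * theta) * t ^ 2))) in *.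
  assert (Hdecay : 0 < decay) by apply exp_pos.
  assert (Hgauss_t : (1 + t ^ 2) ^ 2 * decay <= C2 / t).
  { eapply Rle_trans; [apply Hgauss|].
    apply Rmult_le_compat_l; [lra | apply Rinv_le_contravar; nra]. }
  rewrite Rabs_mult, (Rabs_pos_eq t) by lra.
  apply Rle_trans with (t * Rabs (defect theta s (t / 2)) * decay * e0 + C * e0 / t).
  { replace (t * Rabs (defect theta s (t / 2)) * decay * e0 + C * e0 / t)
      with (t * ((Rabs (defect theta s (t / 2)) * decay + C / s) * e0))
      by (rewrite <- Htt; field; lra).
    apply Rmult_le_compat_l; lra. }
  replace ((M * e0 * C2 + C * e0) / t) with (M * (C2 / t) * e0 + C * e0 / t) by (field; lra).
  apply Rplus_le_compat_r, Rmult_le_compat_r; [lra|].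
  apply Rle_trans with (M * (1 + t ^ 2) ^ 2 * decay).
  - apply Rmult_le_compat_r; [lra | exact Hhalf].
  - rewrite Rmult_assoc. apply Rmult_le_compat_l; [lra | exact Hgauss_t].
Qed.

End Estimate.

Lemma expansion_error_eq (theta gamma s : R) : 0 < theta -> 0 < s ->
  F_s theta s (1 - gamma / sqrt s)
  - ( sqrt (2 / theta) * mills_chi (gamma / sqrt (2 * theta)) * sqrt s
      + gamma ^ 3 * sqrt 2 / (3 * (theta * sqrt theta)) * mills_chi (gamma / sqrt (2 * theta))
      - gamma ^ 2 / (3 * theta)
      - 2 / 3)
  = sqrt s * defect theta s gamma.
Proof.
  intros Htheta Hs. assert (Ht : 0 < sqrt s) by (apply sqrt_lt_R0; lra).
  assert (Hq : 0 < sqrt theta) by (apply sqrt_lt_R0; lra).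
  unfold defect, F_scaled, expansion, corrector, mills_scaled.
  rewrite (sqrt_div_alt 2 theta Htheta). field. lra.
Qed.

Theorem proposition5p3 (theta gamma : R) (Htheta : 0 < theta) :
  is_lim
    (fun s : R =>
       F_s theta s (1 - gamma / sqrt s)
       - ( sqrt (2 / theta) * mills_chi (gamma / sqrt (2 * theta)) * sqrt s
           + gamma ^ 3 * sqrt 2 / (3 * (theta * sqrt theta))
               * mills_chi (gamma / sqrt (2 * theta))
           - gamma ^ 2 / (3 * theta)
           - 2 / 3))
    p_infty 0.
Proof.
  destruct (defect_estimate theta gamma Htheta) as [D HD].
  apply (is_lim_p_infty_of_le_inv_sqrt _ D (4 * gamma ^ 2)).
  intros s Hs. assert (0 <= 4 * gamma ^ 2) by nra.
  rewrite expansion_error_eq by lra.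
  apply HD; [lra | apply le_half_sqrt; lra].
Qed.
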